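(* Consider the system $$\dot x=-y+x(x^3+xy^2)+\sum_{k=1}^2\varepsilon^k\Big(\lambda_kx+\sum_{i+j=4}a_{k,i,j}x^iy^j\Big),\qquad \dot y=x+y(x^3+xy^2)+\sum_{k=1}^2\varepsilon^k\Big(\lambda_ky+\sum_{i+j=4}b_{k,i,j}x^iy^j\Big),$$ and assume $a_{1,1,3}=b_{1,0,4}$, $a_{1,3,1}=b_{1,2,2}$, $b_{1,4,0}=\lambda_1=0$. Then for $z\in(0,3^{-1/3})$ the function $y_1$ has the form $$y_1(\theta,z)=\frac{1}{14580\,z^{11}(1-3z^3\sin\theta)^{4/3}}\Big(m_1(z)\ln(1-3z^3\sin\theta)+R(\theta,z)\Big),$$ where $R$ is a polynomial in $\cos\theta$, $\sin\theta$ and $z$, and $$m_1(z)=1620(b_{1,3,1}-a_{1,4,0})z^{12}+180(-a_{1,2,2}+2a_{1,4,0}+b_{1,1,3}-2b_{1,3,1})z^6+20(a_{1,2,2}-a_{1,0,4}-a_{1,4,0}-b_{1,1,3}+b_{1,3,1}).$$ Moreover the logarithmic term vanishes identically (i.e. $m_1\equiv0$ on $(0,3^{-1/3})$) if and only if $a_{1,2,2}=b_{1,1,3}$, $a_{1,4,0}=b_{1,3,1}$, and $a_{1,0,4}=0$.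
   Context: Write the system in polar coordinates $x=r\cos\theta,y=r\sin\theta$ and expand $dr/d\theta=F_0(\theta,r)+\varepsilon F_1(\theta,r)+O(\varepsilon^2)$, where $F_0=r^4\cos\theta$. Let $r(\theta,z)=z(1-3z^3\sin\theta)^{-1/3}$ (solution of $dr/d\theta=F_0$, $r(0)=z$) and $Y(\theta,z)=(1-3z^3\sin\theta)^{-4/3}$ (solution of $Y'=\partial_rF_0(\theta,r(\theta,z))Y$, $Y(0)=1$). Define $y_1(\theta,z)=Y(\theta,z)\int_0^\theta Y(s,z)^{-1}F_1(s,r(s,z))\,ds$. *)

From Stdlib Require Import Reals.
From Coquelicot Require Import Coquelicot.
Open Scope R_scope.

Definition hom4 (c : nat -> nat -> R) (x y : R) : R :=
  sum_f_R0 (fun i => c i (4 - i)%nat * x ^ i * y ^ (4 - i)) 4.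

Definition xdot (lam : nat -> R) (a b : nat -> nat -> nat -> R) (eps x y : R) : R :=
  - y + x * (x ^ 3 + x * y ^ 2)
  + eps * (lam 1%nat * x + hom4 (a 1%nat) x y)
  + eps ^ 2 * (lam 2%nat * x + hom4 (a 2%nat) x y).

Definition ydot (lam : nat -> R) (a b : nat -> nat -> nat -> R) (eps x y : R) : R :=
  x + y * (x ^ 3 + x * y ^ 2)
  + eps * (lam 1%nat * y + hom4 (b 1%nat) x y)
  + eps ^ 2 * (lam 2%nat * y + hom4 (b 2%nat) x y).

(* dr/dtheta of the system in polar coordinates x = r cos th, y = r sin th:
   dr/dth = rdot / thdot = r (cos th xdot + sin th ydot) / (cos th ydot - sin th xdot). *)
Definition drdth (lam : nat -> R) (a b : nat -> nat -> nat -> R) (eps th r : R) : R :=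
  let x := r * cos th in
  let y := r * sin th in
  r * (cos th * xdot lam a b eps x y + sin th * ydot lam a b eps x y)
    / (cos th * ydot lam a b eps x y - sin th * xdot lam a b eps x y).

Definition F0 (th r : R) : R := r ^ 4 * cos th.

(* F1 = coefficient of eps in the expansion dr/dth = F0 + eps F1 + O(eps^2) *)
Definition F1 (lam : nat -> R) (a b : nat -> nat -> nat -> R) (th r : R) : R :=
  Derive (fun eps => drdth lam a b eps th r) 0.

Definition rsol (th z : R) : R := z * Rpower (1 - 3 * z ^ 3 * sin th) (-1/3).
Definition Ysol (th z : R) : R := Rpower (1 - 3 * z ^ 3 * sin th) (-4/3).

Definition y1 (lam : nat -> R) (a b : nat -> nat -> nat -> R) (th z : R) : R :=
  Ysol th z * RInt (fun s => / Ysol s z * F1 lam a b s (rsol s z)) 0 th.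

Definition m1 (a b : nat -> nat -> nat -> R) (z : R) : R :=
  1620 * (b 1%nat 3%nat 1%nat - a 1%nat 4%nat 0%nat) * z ^ 12
  + 180 * (- a 1%nat 2%nat 2%nat + 2 * a 1%nat 4%nat 0%nat + b 1%nat 1%nat 3%nat
           - 2 * b 1%nat 3%nat 1%nat) * z ^ 6
  + 20 * (a 1%nat 2%nat 2%nat - a 1%nat 0%nat 4%nat - a 1%nat 4%nat 0%nat
          - b 1%nat 1%nat 3%nat + b 1%nat 3%nat 1%nat).

Definition is_poly_cos_sin_z (Rp : R -> R -> R) : Prop :=
  exists (n : nat) (c : nat -> nat -> nat -> R), forall th z,
    Rp th z = sum_f_R0 (fun i => sum_f_R0 (fun j => sum_f_R0 (fun k =>
                c i j k * cos th ^ i * sin th ^ j * z ^ k) n) n) n.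

(* In polar coordinates the eps-coefficient F1 of dr/dtheta is an explicit
   trigonometric polynomial in r (Lemma F1_polar).  Along the unperturbed
   solution r(theta,z) = z u^(-1/3), u = 1 - 3 z^3 sin theta, the integrand
   Y^-1 F1(theta, r) of y1 becomes a polynomial in cos, sin, z plus one term
   divided by u (Lemma integrand_along_orbit).  Under the hypotheses of the
   theorem this integrand has the explicit primitive
       (m1(z) ln u + Rp(theta,z)) / (14580 z^11)
   vanishing at theta = 0 (Lemmas primitive_derive, primitive_at_0), where Rp
   is a polynomial in cos, sin and z; the fundamental theorem of calculus then
   gives y1 = Y * primitive, which is the announced formula.  The verification
   of the derivative is a polynomial identity valid modulo cos^2 + sin^2 = 1,
   proved by lowering every power of cos below 2 (Lemma cos_pow_reduce).
   Finally m1 is a quadratic polynomial in z^6, so it vanishes on an interval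
   iff its three coefficients vanish (Lemma even_quadratic_vanishing). *)

From Stdlib Require Import Reals Lra Lia.
From Coquelicot Require Import Coquelicot.
Open Scope R_scope.

Definition quartic (k : nat -> nat -> R) (c s : R) : R :=
  k 0%nat 4%nat * s ^ 4 + k 1%nat 3%nat * c * s ^ 3 + k 2%nat 2%nat * c ^ 2 * s ^ 2
  + k 3%nat 1%nat * c ^ 3 * s + k 4%nat 0%nat * c ^ 4.

Lemma hom4_polar (k : nat -> nat -> R) (r c s : R) :
  hom4 k (r * c) (r * s) = r ^ 4 * quartic k c s.
Proof. unfold hom4, quartic; simpl; ring. Qed.

Lemma cos2_sin2 (th : R) : cos th ^ 2 + sin th ^ 2 = 1.
Proof. rewrite <- (sin2_cos2 th); unfold Rsqr; ring. Qed.

(* On the circle c^2 + s^2 = 1 every power of c can be lowered by two; used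
   to prove trigonometric polynomial identities with ring. *)
Lemma cos_pow_reduce (c s : R) (n : nat) :
  c ^ 2 + s ^ 2 = 1 -> c ^ S (S n) = c ^ n * (1 - s ^ 2).
Proof. intros H. rewrite <- H. simpl. ring. Qed.

Lemma is_derive_quotient (f g : R -> R) (x df dg fx gx v : R) :
  is_derive f x df -> is_derive g x dg -> f x = fx -> g x = gx -> gx <> 0 ->
  (df * gx - fx * dg) / gx ^ 2 = v -> is_derive (fun t => f t / g t) x v.
Proof.
  intros Hf Hg <- <- Hn <-.
  now apply is_derive_div.
Qed.

Definition F1_angular (a b : nat -> nat -> nat -> R) (th r : R) : R :=
  let c := cos th in let s := sin th in
  let A := quartic (a 1%nat) c s in let B := quartic (b 1%nat) c s in
  r ^ 4 * (c * A + s * B) - r ^ 7 * c * (c * B - s * A).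

(* At eps = 0 the numerator of dr/dtheta is r^5 cos and the denominator is r;
   differentiating the quotient in eps gives F1. *)
Lemma F1_polar (lam : nat -> R) (a b : nat -> nat -> nat -> R) (th r : R) :
  r <> 0 -> F1 lam a b th r = lam 1%nat * r + F1_angular a b th r.
Proof.
  intros Hr. unfold F1. apply is_derive_unique.
  unfold drdth, F1_angular; cbv zeta.
  pose proof (cos2_sin2 th) as Hcs.
  set (c := cos th) in *; set (s := sin th) in *.
  eapply is_derive_quotient with
    (df := r * (c * (lam 1%nat * (r * c) + hom4 (a 1%nat) (r * c) (r * s))
              + s * (lam 1%nat * (r * s) + hom4 (b 1%nat) (r * c) (r * s))))
    (dg := c * (lam 1%nat * (r * s) + hom4 (b 1%nat) (r * c) (r * s))
         - s * (lam 1%nat * (r * c) + hom4 (a 1%nat) (r * c) (r * s)))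
    (fx := r ^ 5 * c) (gx := r).
  - unfold xdot, ydot. auto_derive; [easy | ring].
  - unfold xdot, ydot. auto_derive; [easy | ring].
  - unfold xdot, ydot.
    transitivity (r ^ 5 * c * (c ^ 2 + s ^ 2) ^ 2); [ring | rewrite Hcs; ring].
  - unfold xdot, ydot.
    transitivity (r * (c ^ 2 + s ^ 2)); [ring | rewrite Hcs; ring].
  - exact Hr.
  - rewrite !hom4_polar.
    transitivity (lam 1%nat * r * (c ^ 2 + s ^ 2) + r ^ 4 * (c * quartic (a 1%nat) c s
      + s * quartic (b 1%nat) c s) - r ^ 7 * c * (c * quartic (b 1%nat) c s
      - s * quartic (a 1%nat) c s)); [field; exact Hr | rewrite Hcs; ring].
Qed.

Lemma Rpower_pow_nat (u x : R) (n : nat) :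
  0 < u -> Rpower u x ^ n = Rpower u (x * INR n).
Proof.
  intros Hu. rewrite <- Rpower_pow by (unfold Rpower; apply exp_pos).
  apply Rpower_mult.
Qed.

Lemma Rpower_neg_third_cube (u : R) : 0 < u -> Rpower u (-1/3) ^ 3 = / u.
Proof.
  intros Hu. rewrite Rpower_pow_nat by exact Hu.
  replace (-1/3 * INR 3) with (Ropp 1) by (simpl; field).
  now rewrite Rpower_Ropp, Rpower_1.
Qed.

Lemma orbit_factor_pos (z th : R) : 0 < z -> 3 * z ^ 3 < 1 -> 0 < 1 - 3 * z ^ 3 * sin th.
Proof.
  intros Hz Hz3. pose proof (SIN_bound th) as [_ Hs].
  pose proof (pow_lt z 3 Hz).
  assert (z ^ 3 * sin th <= z ^ 3 * 1) by (apply Rmult_le_compat_l; lra).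
  lra.
Qed.

(* The integrand Y^-1 F1(theta, r(theta,z)) of y1, written out. *)
Definition integrand (a b : nat -> nat -> nat -> R) (z th : R) : R :=
  let c := cos th in let s := sin th in
  let A := quartic (a 1%nat) c s in let B := quartic (b 1%nat) c s in
  z ^ 4 * (c * A + s * B) - z ^ 7 * c * (c * B - s * A) / (1 - 3 * z ^ 3 * s).

(* With p = u^(-1/3): r = z p, Y = p^4 and p^3 = 1/u, so the factors r^4 and
   r^7 of F1 become z^4 and z^7 / u. *)
Lemma integrand_along_orbit (lam : nat -> R) (a b : nat -> nat -> nat -> R) (z th : R) :
  lam 1%nat = 0 -> z <> 0 -> 0 < 1 - 3 * z ^ 3 * sin th ->
  / Ysol th z * F1 lam a b th (rsol th z) = integrand a b z th.
Proof.
  intros Hl Hz Hu. unfold Ysol, rsol, integrand.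
  set (u := 1 - 3 * z ^ 3 * sin th) in *.
  assert (Hp : 0 < Rpower u (-1/3)) by (unfold Rpower; apply exp_pos).
  assert (H4 : Rpower u (-4/3) = Rpower u (-1/3) ^ 4).
  { rewrite Rpower_pow_nat by exact Hu. f_equal. simpl. field. }
  pose proof (Rpower_neg_third_cube u Hu) as H3.
  rewrite F1_polar, Hl by (apply Rmult_integral_contrapositive_currified; lra).
  unfold F1_angular; cbv zeta. rewrite H4. fold u.
  set (p := Rpower u (-1/3)) in *.
  replace u with (/ p ^ 3) by (rewrite H3; field; lra).
  field. lra.
Qed.

Definition monomial (K : R) (i j k : nat) (th z : R) : R :=
  K * cos th ^ i * sin th ^ j * z ^ k.

Definition coefD (a b : nat -> nat -> nat -> R) : R :=
  a 1%nat 2%nat 2%nat - a 1%nat 0%nat 4%nat - a 1%nat 4%nat 0%nat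
  - b 1%nat 1%nat 3%nat + b 1%nat 3%nat 1%nat.
Definition coefE (a b : nat -> nat -> nat -> R) : R :=
  2 * a 1%nat 4%nat 0%nat - a 1%nat 2%nat 2%nat + b 1%nat 1%nat 3%nat
  - 2 * b 1%nat 3%nat 1%nat.

Lemma m1_coefficients (a b : nat -> nat -> nat -> R) (z : R) :
  m1 a b z = 1620 * (b 1%nat 3%nat 1%nat - a 1%nat 4%nat 0%nat) * z ^ 12
             + 180 * coefE a b * z ^ 6 + 20 * coefD a b.
Proof. unfold m1, coefD, coefE; ring. Qed.

Definition Rp (a b : nat -> nat -> nat -> R) (th z : R) : R :=
  let a2 := a 1%nat 2%nat 2%nat in let a4 := a 1%nat 4%nat 0%nat in
  let b0 := b 1%nat 0%nat 4%nat in
  let b1 := b 1%nat 1%nat 3%nat in let b2 := b 1%nat 2%nat 2%nat in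
  let b3 := b 1%nat 3%nat 1%nat in
  let D := coefD a b in let E := coefE a b in
  monomial (60 * D) 0 1 3 th z + monomial (90 * D) 0 2 6 th z
  + monomial (180 * D) 0 3 9 th z + monomial (405 * D) 0 4 12 th z
  + monomial (-1944 * D) 0 5 15 th z
  + monomial (540 * E) 0 1 9 th z + monomial (810 * E) 0 2 12 th z
  + monomial (4860 * b2 + 9720 * b0) 0 0 15 th z
  + monomial (- (4860 * b2 + 9720 * b0)) 1 0 15 th z
  + monomial (4860 * (b2 - b0)) 1 2 15 th z
  + monomial (4860 * b3 + 9720 * a4) 0 1 15 th z
  + monomial (1620 * b3 + 1620 * b1 - 6480 * a4 + 3240 * a2) 0 3 15 th z.

Definition primitive (a b : nat -> nat -> nat -> R) (z th : R) : R :=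
  (m1 a b z * ln (1 - 3 * z ^ 3 * sin th) + Rp a b th z) / (14580 * z ^ 11).

Lemma primitive_at_0 (a b : nat -> nat -> nat -> R) (z : R) :
  z <> 0 -> primitive a b z 0 = 0.
Proof.
  intros Hz. unfold primitive, Rp, monomial. rewrite sin_0, cos_0.
  replace (1 - 3 * z ^ 3 * 0) with 1 by ring. rewrite ln_1. field. exact Hz.
Qed.

(* Differentiating the primitive gives the integrand; this is where the three
   relations a113 = b104, a131 = b122, b140 = 0 are needed. *)
Lemma primitive_derive (a b : nat -> nat -> nat -> R) (z th : R) :
  a 1%nat 1%nat 3%nat = b 1%nat 0%nat 4%nat ->
  a 1%nat 3%nat 1%nat = b 1%nat 2%nat 2%nat ->
  b 1%nat 4%nat 0%nat = 0 ->
  z <> 0 -> 0 < 1 - 3 * z ^ 3 * sin th ->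
  is_derive (primitive a b z) th (integrand a b z th).
Proof.
  intros H1 H2 H3 Hz Hu.
  unfold primitive, Rp, monomial; cbv zeta. auto_derive; [lra|].
  unfold integrand, quartic, m1, coefD, coefE; rewrite H1, H2, H3.
  pose proof (cos2_sin2 th) as Hcs.
  set (c := cos th) in *; set (s := sin th) in *.
  apply Rminus_diag_uniq.
  field_simplify; [| split; [lra | exact Hz]].
  match goal with |- ?P / _ = 0 => replace P with 0; [unfold Rdiv; ring |] end.
  ring_simplify. repeat rewrite (cos_pow_reduce c s _ Hcs). ring.
Qed.

Lemma y1_closed_form (lam : nat -> R) (a b : nat -> nat -> nat -> R) (th z : R) :
  a 1%nat 1%nat 3%nat = b 1%nat 0%nat 4%nat ->
  a 1%nat 3%nat 1%nat = b 1%nat 2%nat 2%nat ->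
  b 1%nat 4%nat 0%nat = 0 ->
  lam 1%nat = 0 -> 0 < z -> 3 * z ^ 3 < 1 ->
  y1 lam a b th z = Ysol th z * primitive a b z th.
Proof.
  intros H1 H2 H3 Hl Hz Hz3.
  assert (Hz0 : z <> 0) by lra.
  pose proof (fun x => orbit_factor_pos z x Hz Hz3) as Hu.
  assert (Hcont : forall x, continuous (integrand a b z) x).
  { intros x. apply (ex_derive_continuous (integrand a b z)).
    unfold integrand, quartic. specialize (Hu x). auto_derive. lra. }
  unfold y1. f_equal.
  rewrite (RInt_ext _ (integrand a b z))
    by (intros x _; apply integrand_along_orbit; auto).
  rewrite (is_RInt_unique _ _ _ _ (is_RInt_derive (primitive a b z) _ 0 th
            (fun x _ => primitive_derive a b z x H1 H2 H3 Hz0 (Hu x))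
            (fun x _ => Hcont x))).
  change (minus ?u ?v) with (u - v).
  rewrite primitive_at_0 by exact Hz0. apply Rminus_0_r.
Qed.

Definition poly_deg_le (N : nat) (f : R -> R -> R) : Prop :=
  exists c : nat -> nat -> nat -> R, forall th z,
    f th z = sum_f_R0 (fun i => sum_f_R0 (fun j => sum_f_R0 (fun k =>
                c i j k * cos th ^ i * sin th ^ j * z ^ k) N) N) N.

Lemma poly_deg_le_add (N : nat) (f g : R -> R -> R) :
  poly_deg_le N f -> poly_deg_le N g -> poly_deg_le N (fun th z => f th z + g th z).
Proof.
  intros [cf Hf] [cg Hg]. exists (fun i j k => cf i j k + cg i j k).
  intros th z. rewrite Hf, Hg.
  rewrite <- sum_plus; apply sum_eq; intros.
  rewrite <- sum_plus; apply sum_eq; intros.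
  rewrite <- sum_plus; apply sum_eq; intros. ring.
Qed.

Lemma sum_f_R0_single (f : nat -> R) (n i : nat) :
  (i <= n)%nat -> (forall j, (j <= n)%nat -> j <> i -> f j = 0) ->
  sum_f_R0 f n = f i.
Proof.
  induction n as [|n IH]; intros Hi Hf; simpl.
  - now replace i with 0%nat by lia.
  - destruct (Nat.eq_dec i (S n)) as [->|Hne].
    + rewrite sum_eq_R0; [ring|]. intros j Hj; apply Hf; lia.
    + rewrite IH, (Hf (S n)) by (lia || (intros; apply Hf; lia)). ring.
Qed.

Lemma poly_deg_le_monomial (N : nat) (K : R) (i j k : nat) :
  (i <= N)%nat -> (j <= N)%nat -> (k <= N)%nat ->
  poly_deg_le N (monomial K i j k).
Proof.
  intros Hi Hj Hk. unfold monomial.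
  exists (fun i' j' k' => if (Nat.eqb i' i && Nat.eqb j' j && Nat.eqb k' k)%bool then K else 0).
  intros th z.
  rewrite (sum_f_R0_single _ N i Hi).
  2:{ intros i' _ Hne. apply sum_eq_R0; intros; apply sum_eq_R0; intros.
      rewrite (proj2 (Nat.eqb_neq _ _) Hne). simpl. ring. }
  rewrite (sum_f_R0_single _ N j Hj).
  2:{ intros j' _ Hne. apply sum_eq_R0; intros.
      rewrite (proj2 (Nat.eqb_neq _ _) Hne), Nat.eqb_refl. simpl. ring. }
  rewrite (sum_f_R0_single _ N k Hk).
  2:{ intros k' _ Hne. rewrite (proj2 (Nat.eqb_neq _ _) Hne), !Nat.eqb_refl. simpl. ring. }
  rewrite !Nat.eqb_refl. simpl. ring.
Qed.

Lemma Rp_poly (a b : nat -> nat -> nat -> R) : is_poly_cos_sin_z (Rp a b).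
Proof.
  assert (H : poly_deg_le 15 (Rp a b)).
  { unfold Rp; cbv zeta.
    repeat apply poly_deg_le_add; apply poly_deg_le_monomial; lia. }
  destruct H as [c Hc]. now exists 15%nat, c.
Qed.

Lemma cube_root_third_gt_half : 1/2 < Rpower 3 (-1/3).
Proof.
  pose proof (Rpower_neg_third_cube 3 ltac:(lra)) as H3.
  set (q := Rpower 3 (-1/3)) in *.
  destruct (Rlt_or_le (1/2) q) as [Hq | Hq]; [exact Hq |].
  assert (q ^ 3 <= (1/2) ^ 3) by (apply pow_incr; split; [left; apply exp_pos | exact Hq]).
  simpl in *. lra.
Qed.

Lemma below_cube_root_third (z : R) : 0 < z < Rpower 3 (-1/3) -> 3 * z ^ 3 < 1.
Proof.
  intros [Hz Hq].
  pose proof (Rpower_neg_third_cube 3 ltac:(lra)) as H3.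
  set (q := Rpower 3 (-1/3)) in *.
  assert (z ^ 3 < q ^ 3).
  { assert (0 < (q - z) * (q ^ 2 + q * z + z ^ 2)) by (apply Rmult_lt_0_compat; nra).
    nra. }
  lra.
Qed.

(* A quadratic polynomial in z^6 vanishing on (0, q0) with q0 > 1/2 is zero:
   evaluate at z = 1/2, 1/4, 1/8. *)
Lemma even_quadratic_vanishing (p q r q0 : R) :
  1/2 < q0 -> (forall z, 0 < z < q0 -> p * z ^ 12 + q * z ^ 6 + r = 0) ->
  p = 0 /\ q = 0 /\ r = 0.
Proof.
  intros Hq0 H.
  pose proof (H (1/2) ltac:(lra)) as E1.
  pose proof (H (1/4) ltac:(lra)) as E2.
  pose proof (H (1/8) ltac:(lra)) as E3.
  simpl in E1, E2, E3. repeat split; lra.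
Qed.

Lemma m1_vanishing_iff (a b : nat -> nat -> nat -> R) :
  (forall z, 0 < z < Rpower 3 (-1/3) -> m1 a b z = 0) <->
  (a 1%nat 2%nat 2%nat = b 1%nat 1%nat 3%nat /\
   a 1%nat 4%nat 0%nat = b 1%nat 3%nat 1%nat /\
   a 1%nat 0%nat 4%nat = 0).
Proof.
  split.
  - intros H.
    destruct (even_quadratic_vanishing _ _ _ _ cube_root_third_gt_half
                (fun z Hz => eq_trans (eq_sym (m1_coefficients a b z)) (H z Hz)))
      as (Hp & HE & HD).
    unfold coefD, coefE in *. repeat split; lra.
  - intros (h1 & h2 & h3) z _. unfold m1. rewrite h1, h2, h3. ring.
Qed.

Theorem mainTheorem9 (lam : nat -> R) (a b : nat -> nat -> nat -> R) :
  a 1%nat 1%nat 3%nat = b 1%nat 0%nat 4%nat ->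
  a 1%nat 3%nat 1%nat = b 1%nat 2%nat 2%nat ->
  b 1%nat 4%nat 0%nat = 0 ->
  lam 1%nat = 0 ->
  (exists Rp : R -> R -> R, is_poly_cos_sin_z Rp /\
     forall th z, 0 < z < Rpower 3 (-1/3) ->
       y1 lam a b th z =
         / (14580 * z ^ 11 * Rpower (1 - 3 * z ^ 3 * sin th) (4/3))
         * (m1 a b z * ln (1 - 3 * z ^ 3 * sin th) + Rp th z))
  /\
  ((forall z, 0 < z < Rpower 3 (-1/3) -> m1 a b z = 0) <->
   (a 1%nat 2%nat 2%nat = b 1%nat 1%nat 3%nat /\
    a 1%nat 4%nat 0%nat = b 1%nat 3%nat 1%nat /\
    a 1%nat 0%nat 4%nat = 0)).
Proof.
  intros H1 H2 H3 Hl. split; [| apply m1_vanishing_iff].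
  exists (Rp a b). split; [apply Rp_poly |].
  intros th z Hzq.
  pose proof (below_cube_root_third z Hzq) as Hz3.
  destruct Hzq as [Hz _].
  rewrite y1_closed_form by assumption.
  unfold Ysol, primitive.
  replace (-4/3) with (- (4/3)) by field. rewrite Rpower_Ropp.
  assert (0 < Rpower (1 - 3 * z ^ 3 * sin th) (4/3)) by apply exp_pos.
  field. split; lra.
Qed.
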